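(* Let $\mathcal{M}$ be a separable metric space, $f:\mathcal{M}\to\mathcal{M}$ continuous, and $\mathcal{X}\subseteq\mathcal{M}$ forward invariant under $f$ and path connected. Consider $x_{k+1}=f(x_k)$ on $\mathcal{X}$, with $\mathcal{W}$ its set of $\omega$-limit sets. Suppose: (T1') there exist a separable metric space $\mathcal{Z}$, a continuous map $g:\mathcal{Z}\to\mathcal{Z}$ such that $z_{k+1}=g(z_k)$ on $\mathcal{Z}$ has closed basins, and a continuous map $F:\mathcal{X}\to\mathcal{Z}$ with $F\circ f=g\circ F$ on $\mathcal{X}$; (T2') every trajectory of $x_{k+1}=f(x_k)$ on $\mathcal{X}$ is forward precompact in $\mathcal{X}$; (T3') $\mathcal{W}$ is countable. Then the set $\{F(\Omega)\mid\Omega\in\mathcal{W}\}$ has exactly one element.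
   Context: The forward orbit of $\xi$ is $\{f^k(\xi)\mid k\in\mathbb{N}\}$; the trajectory through $\xi$ is forward precompact in $\mathcal{X}$ if the closure in $\mathcal{X}$ of its forward orbit is compact. $\omega_{\mathcal{X}}(\xi)$ is the set of $x\in\mathcal{X}$ such that $f^{k_j}(\xi)\to x$ for some indices $k_j\to\infty$; $\mathcal{W}=\{\omega_{\mathcal{X}}(\xi)\mid\xi\in\mathcal{X}\}$. For the system $z_{k+1}=g(z_k)$ on $\mathcal{Z}$, $\omega_{\mathcal{Z}}$ and its set of $\omega$-limit sets are defined analogously, and the domain of attraction of an $\omega$-limit set $\Omega$ is $D^+_{\mathcal{Z}}(\Omega)=\{\zeta\in\mathcal{Z}\mid\omega_{\mathcal{Z}}(\zeta)=\Omega\}$; the system has closed basins if $D^+_{\mathcal{Z}}(\Omega)$ is closed for every $\omega$-limit set $\Omega$ of that system. *)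

From HB Require Import structures.
From mathcomp Require Import all_boot all_order all_algebra.
From mathcomp Require Import all_classical all_reals all_analysis.
Set Implicit Arguments. Unset Strict Implicit. Unset Printing Implicit Defensive.
Import Order.TTheory GRing.Theory Num.Theory.
Local Open Scope classical_set_scope.
Local Open Scope ring_scope.

Definition separable (T : topologicalType) : Prop :=
  exists S : set T, countable S /\ dense S.

Definition path_connected_set (R : realType) (T : topologicalType) (A : set T) : Prop :=
  A !=set0 /\
  forall x y, A x -> A y ->
    exists gam : R -> T,
      {within `[0, 1], continuous gam} /\ gam 0 = x /\ gam 1 = y /\
      gam @` `[0, 1] `<=` A.

Definition forward_orbit (T : Type) (f : T -> T) (xi : T) : set T :=
  [set iter k f xi | k in [set: nat]].

Definition forward_precompact_in (T : topologicalType) (A : set T)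
    (f : T -> T) (xi : T) : Prop :=
  compact (A `&` closure (forward_orbit f xi)).

Definition omega_limit (T : topologicalType) (A : set T) (f : T -> T) (xi : T) : set T :=
  [set x | A x /\ exists k : nat -> nat,
      (forall N : nat, \forall j \near \oo, (N <= k j)%N) /\
      (fun j => iter (k j) f xi) @ \oo --> x].

Definition omega_limit_sets (T : topologicalType) (A : set T) (f : T -> T) : set (set T) :=
  [set omega_limit A f xi | xi in A].

Definition domain_of_attraction (T : topologicalType) (g : T -> T) (Om : set T) : set T :=
  [set z | omega_limit setT g z = Om].

Definition closed_basins (T : topologicalType) (g : T -> T) : Prop :=
  forall Om, omega_limit_sets setT g Om -> closed (domain_of_attraction g Om).

(* Along a path gam in X, the map t |-> omega(F (gam t)) into the omega-limit sets of g
   has closed fibers (the basins of g are closed and F o gam is continuous) and only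
   countably many values (since F(omega_X(xi)) = omega_Z(F xi) by precompactness, and
   W is countable).  A map on [0, 1] with countably many closed fibers is constant
   (Sierpinski): otherwise nested intervals whose endpoints keep distinct values can
   be chosen so that the n-th one avoids the n-th value, and a point common to all of
   them takes no value at all.  So all points of X have the same F-image of their
   omega-limit set. *)

From HB Require Import structures.
From mathcomp Require Import all_boot all_order all_algebra.
From mathcomp Require Import all_classical all_reals all_analysis.
From mathcomp Require Import lra.
Import Order.TTheory GRing.Theory Num.Theory numFieldNormedType.Exports.
Local Open Scope classical_set_scope.
Local Open Scope ring_scope.

Lemma cvg_nat_inftyP (k : nat -> nat) :
  k @ \oo --> \oo <-> forall N, \forall j \near \oo, (N <= k j)%N.
Proof.
split=> [kinf N|kinf P [N _ NP]]; first exact: kinf (nbhs_infty_ge N).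
by apply: filterS (kinf N) => j /NP.
Qed.

Lemma cvg_ge_id (m : nat -> nat) : (forall j, j <= m j)%N -> m @ \oo --> \oo.
Proof.
move=> m_ge; apply/cvg_nat_inftyP => N.
by apply: filterS (nbhs_infty_ge N) => j /leq_trans; apply.
Qed.

Lemma cvg_within_in {T : Type} {U : topologicalType} {F : set_system T}
    {FF : Filter F} {w : T -> U} {A : set U} {x : U} :
  (\forall t \near F, A (w t)) -> w @ F --> x -> w @ F --> within A (nbhs x).
Proof. by move=> Aw wx P /wx; apply: filterS2 Aw => t Awt /(_ Awt). Qed.

Lemma within_continuous_cvg {T : Type} {U V : topologicalType} {F : set_system T}
    {FF : Filter F} {h : U -> V} {A : set U} {w : T -> U} {x : U} :
  {within A, continuous h} -> A x -> (\forall t \near F, A (w t)) ->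
  w @ F --> x -> h \o w @ F --> h x.
Proof.
move=> /subspace_continuousP hc Ax Aw wx.
exact: cvg_comp (cvg_within_in Aw wx) (hc x Ax).
Qed.

Lemma within_continuous_comp_within {U V W : topologicalType} (A : set U) (B : set V)
    (h : U -> V) (k : V -> W) :
  {within A, continuous h} -> {within B, continuous k} -> h @` A `<=` B ->
  {within A, continuous (k \o h)}.
Proof.
move=> hc kc hAB; apply/subspace_continuousP => x Ax.
apply: (within_continuous_cvg kc (hAB _ (imageP _ Ax))).
  by apply: filterS (withinT A _) => t At; apply: hAB; exists t.
by move/subspace_continuousP : hc; apply.
Qed.

Lemma cluster_subseq {R : realType} {M : pseudoMetricType R} (w : nat -> M) (x : M) :
  cluster (w @ \oo) x -> exists2 m : nat -> nat, m @ \oo --> \oo & w \o m @ \oo --> x.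
Proof.
move=> wx.
have /choice[m mP] : forall j, exists m, (j <= m)%N /\ ball x j.+1%:R^-1 (w m).
  move=> j; have [] := wx [set w n | n in [set n | j <= n]%N] (ball x j.+1%:R^-1).
  - by apply: filterS (nbhs_infty_ge j) => n jn; exists n.
  - by apply: nbhsx_ballx; rewrite invr_gt0 ltr0n.
  by move=> _ [[n jn <-] wn]; exists n.
exists m; first by apply: cvg_ge_id => j; case: (mP j).
apply/cvg_ballP => eps eps0; near=> j.
apply: le_ball (mP j).2; apply/ltW; near: j.
exact: near_infty_natSinv_lt (PosNum eps0).
Unshelve. all: end_near. Qed.

Lemma nested_intervals {R : realType} (u v : R ^nat) :
  (forall n, u n <= u n.+1) -> (forall n, v n.+1 <= v n) ->
  (forall n, u n <= v n) -> exists c, forall n, u n <= c <= v n.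
Proof.
move=> /nondecreasing_seqP u_incr /nonincreasing_seqP v_decr uv.
have u_le_v i j : u i <= v j.
  rewrite (le_trans (u_incr _ _ (leq_maxl i j)))//.
  by rewrite (le_trans (uv _))// v_decr// leq_maxr.
have u_sup : has_sup (range u).
  by split; [exists (u 0%N), 0%N | exists (v 0%N) => _ [i _ <-]].
exists (sup (range u)) => n; apply/andP; split.
  by apply: sup_upper_bound => //; exists n.
by apply: ge_sup => [|_ [i _ <-]]; [exists (u 0%N), 0%N|].
Qed.

Section closed_fibers.
Context {R : realType} {Y : Type}.

Definition closed_fibers_on (q : R -> Y) (a b : R) : Prop :=
  forall y c, a <= c <= b ->
  (forall eps, 0 < eps -> exists t, [/\ a <= t <= b, `|t - c| < eps & q t = y]) ->
  q c = y.

Lemma closed_fibers_on_sub {q a b a' b'} : a <= a' -> b' <= b ->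
  closed_fibers_on q a b -> closed_fibers_on q a' b'.
Proof.
move=> aa' b'b qcl y c /andP[a'c cb'] yc; apply: qcl; first by apply/andP; split; lra.
move=> eps eps0; have [t [/andP[a't tb'] tc qt]] := yc eps eps0.
by exists t; split => //; apply/andP; split; lra.
Qed.

Lemma closed_fibers_on_opp {q a b} : closed_fibers_on q a b ->
  closed_fibers_on (fun t => q (- t)) (- b) (- a).
Proof.
move=> qcl y c /andP[bc ca] yc; apply: qcl; first by apply/andP; split; lra.
move=> eps eps0; have [t [/andP[bt ta] tc qt]] := yc eps eps0.
exists (- t); split => //; first by apply/andP; split; lra.
by rewrite -opprD normrN.
Qed.

Lemma avoid_value_left {q a b y} : a <= b -> closed_fibers_on q a b ->
  q a <> y -> q a <> q b ->
  exists2 b', a <= b' <= b & q a <> q b' /\ forall t, a <= t <= b' -> q t <> y.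
Proof.
move=> ab qcl qay qab.
pose A := [set t | a <= t <= b /\ q t = y].
have [[t0 At0]|noA] := pselect (A !=set0); last first.
  exists b; first by apply/andP; split.
  by split => // t tab qty; apply: noA; exists t.
have A_inf : has_inf A by split; [exists t0 | exists a => t [/andP[]]].
set c := inf A.
have [/andP[at0 t0b] qt0] := At0.
have ac : a <= c by apply: lb_le_inf => [|t [/andP[]]]; first by exists t0.
have ct0 : c <= t0 by apply: ge_inf; [exists a => t [/andP[]] | ].
have qcy : q c = y.
  apply: qcl; first by apply/andP; split; lra.
  move=> eps eps0; have [t [/andP[a_t tb] qty] tc] := inf_adherent eps0 A_inf.
  have ct : c <= t.
    by apply: ge_inf; [exists a => s [/andP[]] | split => //; apply/andP].
  by exists t; split => //; [apply/andP; split | rewrite ger0_norm]; lra.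
have a_lt_c : a < c.
  by rewrite lt_neqAle ac andbT; apply/eqP => ac_eq; apply: qay; rewrite ac_eq.
(* Since q c <> q a, the fiber of q a cannot contain [a, c). *)
have [[t [/andP[a_t tc] qta]]|] := pselect (exists t, a <= t < c /\ q t <> q a).
  exists t; first by apply/andP; split; lra.
  split => [qat|s /andP[a_s st] qsy]; first by apply: qta.
  have : c <= s.
    by apply: ge_inf; [exists a => u [/andP[]] | split => //; apply/andP; split; lra].
  lra.
move=> nt; exfalso; apply: qay; rewrite -qcy; apply/esym/qcl.
  by apply/andP; split; lra.
move=> eps eps0.
have [t [a_t tc ct]] : exists t, [/\ a <= t, t < c & c - t < eps].
  have [le_a|lt_a] := leP (c - eps / 2) a; first by exists a; split; lra.
  by exists (c - eps / 2); split; lra.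
exists t; split; first (by apply/andP; split; lra); first by rewrite ler0_norm; lra.
by apply: contrapT => qta; apply: nt; exists t; split => //; apply/andP; split.
Qed.

Lemma avoid_value {q a b} y : a <= b -> closed_fibers_on q a b -> q a <> q b ->
  exists a' b', [/\ a <= a', a' <= b', b' <= b, q a' <> q b' &
                   forall t, a' <= t <= b' -> q t <> y].
Proof.
move=> ab qcl qab; have [qay|qay] := pselect (q a = y); last first.
  have [b' /andP[ab' b'b] [qab' b'y]] := avoid_value_left ab qcl qay qab.
  by exists a, b'.
have qby : q b <> y by move=> qby; apply: qab; rewrite qay qby.
have nba : - b <= - a by rewrite lerN2.
have qba : q b <> q a by move/esym.
have := avoid_value_left nba (closed_fibers_on_opp qcl); rewrite !opprK.
move=> /(_ y qby qba) [a' /andP[ba' a'a] [qba' a'y]].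
exists (- a'), b; split; first (by rewrite lerNr); first (by rewrite lerNl).
- by [].
- by move=> qa'b; apply: qba'; rewrite qa'b.
by move=> t /andP[a't tb]; rewrite -[t]opprK; apply: a'y; rewrite lerN2 tb lerNl a't.
Qed.

Lemma avoid_all_values {q a b} (y : nat -> Y) : a <= b -> closed_fibers_on q a b ->
  q a <> q b -> exists2 c, a <= c <= b & forall n, q c <> y n.
Proof.
move=> ab qcl qab.
pose P (p : R * R) := [/\ a <= p.1, p.1 <= p.2, p.2 <= b & q p.1 <> q p.2].
(* The refinement step is stated as an implication so that [choice] yields a total
   step function [h]. *)
have /choice[h hP] : forall np : nat * (R * R), exists p', P np.2 ->
    [/\ P p', np.2.1 <= p'.1, p'.2 <= np.2.2 &
        forall t, p'.1 <= t <= p'.2 -> q t <> y np.1].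
  move=> [n [a0 b0]].
  have [[/= aa0 a0b0 b0b qab0]|] := pselect (P (a0, b0)); last by exists (a0, b0).
  have [a' [b' [a0a' a'b' b'b0 qab' a'b'y]]] :=
    avoid_value (y n) a0b0 (closed_fibers_on_sub aa0 b0b qcl) qab0.
  by exists (a', b') => _; split => //; split => //=; lra.
pose fix p n := if n is n'.+1 then h (n', p n') else (a, b).
have Pp n : P (p n).
  by elim: n => [|n Ppn]; [split => //=; lra | have [] := hP (n, p n) Ppn].
have [c cp] : exists c, forall n, (p n).1 <= c <= (p n).2.
  apply: nested_intervals => n; first by have [] := hP (n, p n) (Pp n).
    by have [] := hP (n, p n) (Pp n).
  by have [] := Pp n.
exists c; first exact: cp 0%N.
by move=> n; have [_ _ _] := hP (n, p n) (Pp n); apply; apply: cp n.+1.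
Qed.

Lemma countable_closed_fibers_constant {q a b} : closed_fibers_on q a b ->
  countable (q @` `[a, b]) -> forall s t, a <= s <= b -> a <= t <= b -> q s = q t.
Proof.
move=> qcl /pfcard_geP[img0 s t as_b _|/surjfunPex[y img_y]].
  suff : (q @` `[a, b]) (q s) by rewrite img0.
  by exists s => //; rewrite /= in_itv.
move=> s t; wlog st : s t / s <= t => [wlog_st as_b at_b|/andP[as_ sb] /andP[at_ tb]].
  by have [st|/ltW ts] := leP s t; [|apply/esym]; apply: wlog_st.
apply: contrapT => qst.
have [c /andP[sc ct] cy] := avoid_all_values y st (closed_fibers_on_sub as_ tb qcl) qst.
have : (q @` `[a, b]) (q c).
  by exists c => //; rewrite /= in_itv /=; apply/andP; split; lra.
by rewrite img_y => -[n _ ync]; apply: (cy n).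
Qed.

End closed_fibers.

Lemma closed_fibers_on_comp {R : realType} {Z : topologicalType} {Y : Type}
    (phi : Z -> Y) (h : R -> Z) (a b : R) :
  (forall y, closed (phi @^-1` [set y])) -> {within `[a, b], continuous h} ->
  closed_fibers_on (phi \o h) a b.
Proof.
move=> phi_cl /subspace_continuousP hc y c cab yc.
suff : closure (phi @^-1` [set y]) (h c) by rewrite -(closure_id _).1.
move=> B /(hc c); rewrite /= in_itv /= => /(_ cab).
move=> /nbhs_ballP[eps eps0 epsB]; have [t [tab tc qty]] := yc eps eps0.
exists (h t); split => //; apply: epsB; last by rewrite /= in_itv.
by rewrite /ball /= distrC.
Qed.

Lemma closed_basins_closed_fibers {Z : topologicalType} (g : Z -> Z) :
  closed_basins g -> forall Om, closed (omega_limit setT g @^-1` [set Om]).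
Proof.
move=> g_cb Om; have [[z gzOm]|] := pselect (exists z, omega_limit setT g z = Om).
  by apply: g_cb; exists z.
move=> noz; suff -> : omega_limit setT g @^-1` [set Om] = set0 by exact: closed0.
by apply/seteqP; split => // z gzOm; apply: noz; exists z.
Qed.

Section semiconjugacy.
Context {R : realType} {M Z : metricType R} {f : M -> M} {g : Z -> Z} {F : M -> Z}
  {X : set M}.
Hypothesis fX : f @` X `<=` X.
Hypothesis Fc : {within X, continuous F}.
Hypothesis Ffg : forall x, X x -> F (f x) = g (F x).

Lemma iter_forward_invariant k x : X x -> X (iter k f x).
Proof. by move=> Xx; elim: k => //= k Xk; apply: fX; exists (iter k f x). Qed.

Lemma iter_semiconj k x : X x -> F (iter k f x) = iter k g (F x).
Proof.
by move=> Xx; elim: k => //= k IHk; rewrite Ffg ?IHk//; apply: iter_forward_invariant.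
Qed.

Lemma image_omega_limit_sub xi : X xi ->
  F @` omega_limit X f xi `<=` omega_limit setT g (F xi).
Proof.
move=> Xxi _ [x [Xx [k [kinf kx]]] <-]; split => //; exists k; split => //.
under eq_fun => j do rewrite -iter_semiconj//.
apply: (within_continuous_cvg Fc Xx _ kx).
by apply: filterE => j; apply: iter_forward_invariant.
Qed.

Lemma omega_limit_sub_image xi : X xi -> forward_precompact_in X f xi ->
  omega_limit setT g (F xi) `<=` F @` omega_limit X f xi.
Proof.
move=> Xxi xi_pc z [_ [k [/cvg_nat_inftyP kinf Fkz]]].
pose w j := iter (k j) f xi.
have Xw j : X (w j) by apply: iter_forward_invariant.
have [x [[Xx _] /cluster_subseq[m minf wmx]]] :
    X `&` closure (forward_orbit f xi) `&` cluster (w @ \oo) !=set0.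
  apply: xi_pc; exists 0%N => // j _; split; first exact: Xw.
  by apply: subset_closure; exists (k j).
exists x; last first.
  have Xwm : \forall j \near \oo, X (w (m j)) by apply: filterE.
  apply: (cvg_unique (@metric_hausdorff R Z) (within_continuous_cvg Fc Xx Xwm wmx)).
  have -> : F \o (fun j => w (m j)) = (fun j => iter (k j) g (F xi)) \o m.
    by apply/funext => j; rewrite /= iter_semiconj.
  exact: cvg_comp minf Fkz.
split => //; exists (k \o m); split => //.
by apply/cvg_nat_inftyP; apply: cvg_comp minf kinf.
Qed.

Lemma image_omega_limit xi : X xi -> forward_precompact_in X f xi ->
  F @` omega_limit X f xi = omega_limit setT g (F xi).
Proof.
move=> Xxi xi_pc; apply/seteqP; split.
  exact: image_omega_limit_sub.
exact: omega_limit_sub_image.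
Qed.

Hypothesis X_pc : forall xi, X xi -> forward_precompact_in X f xi.
Hypothesis W_cnt : countable (omega_limit_sets X f).
Hypothesis g_cb : closed_basins g.

Lemma omega_limit_eq_along_path (gam : R -> M) :
  {within `[0, 1], continuous gam} -> gam @` `[0, 1] `<=` X ->
  omega_limit setT g (F (gam 0)) = omega_limit setT g (F (gam 1)).
Proof.
move=> gamc gamX; pose q := omega_limit setT g \o (F \o gam).
have FW_cnt : countable [set F @` Om | Om in omega_limit_sets X f].
  exact: sub_countable (card_image_le _ _) W_cnt.
have q_cnt : countable (q @` `[0, 1]).
  apply: sub_countable (subset_card_le _) FW_cnt.
  move=> _ [t t01 <-]; have Xt : X (gam t) by apply: gamX; exists t.
  exists (omega_limit X f (gam t)); first by exists (gam t).
  by rewrite image_omega_limit //; apply: X_pc.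
have q_cl : closed_fibers_on q 0 1.
  apply: closed_fibers_on_comp; first exact: closed_basins_closed_fibers.
  exact: within_continuous_comp_within gamc Fc gamX.
by apply: (countable_closed_fibers_constant q_cl q_cnt); rewrite ?lexx ?ler01.
Qed.
End semiconjugacy.

Theorem theorem20 (R : realType) (M : metricType R) (f : M -> M) (X : set M)
  (Z : metricType R) (g : Z -> Z) (F : M -> Z) :
  separable M -> continuous f ->
  f @` X `<=` X -> path_connected_set R X ->
  (* (T1') *)
  separable Z -> continuous g -> closed_basins g ->
  {within X, continuous F} -> (forall x, X x -> F (f x) = g (F x)) ->
  (* (T2') *)
  (forall xi, X xi -> forward_precompact_in X f xi) ->
  (* (T3') *)
  countable (omega_limit_sets X f) ->
  exists S : set Z, [set F @` Om | Om in omega_limit_sets X f] = [set S].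
Proof.
move=> _ _ fX [[xi0 Xxi0] X_path] _ _ g_cb Fc Ffg X_pc W_cnt.
exists (F @` omega_limit X f xi0); apply/seteqP; split; last first.
  by move=> _ ->; exists (omega_limit X f xi0) => //; exists xi0.
have imgE xi : X xi -> F @` omega_limit X f xi = omega_limit setT g (F xi).
  by move=> Xxi; apply: image_omega_limit => //; apply: X_pc.
move=> _ [_ [xi Xxi <-] <-] /=; rewrite !imgE //.
have [gam [gamc [<- [<- gamX]]]] := X_path xi xi0 Xxi Xxi0.
exact: omega_limit_eq_along_path fX Fc Ffg X_pc W_cnt g_cb gam gamc gamX.
Qed.
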